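(* Let $p\ge 5$ be a prime. Then $H^1(\mathrm{Alt}(5),X_{\{3\}})\cong C_3$ (here $p=5$), and $H^1(\mathrm{Alt}(p),D_{\{q\}})=0$ for all primes $q$ with $(p,q)\neq(5,3)$.
   Context: $\mathrm{Alt}(p)$ is identified with the group of permutation matrices of even permutations (via $\alpha\mapsto[\delta_{i\alpha,j}]_{i,j}$), acting by conjugation on the group $\mathrm{D}(p,\mathbb{C})$ of invertible diagonal matrices. $D$ is the torsion subgroup of $\mathrm{D}(p,\mathbb{C})$ and $D_{\{q\}}$ its subgroup of elements of $q$-power order. $X=\mathrm{SL}(p,\mathbb{C})\cap\mathrm{D}(p,\mathbb{C})$ and $X_{\{3\}}$ its subgroup of elements of $3$-power order (for $p=5$). *)

From HB Require Import structures.
From mathcomp Require Import all_boot all_order all_algebra all_fingroup all_solvable all_field.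
Set Implicit Arguments. Unset Strict Implicit. Unset Printing Implicit Defensive.
Import GRing.Theory Num.Theory.
Local Open Scope ring_scope.

(* The complex field is modelled by an arbitrary numClosedFieldType C
   (algebraically closed field of characteristic 0, e.g. complex numbers). *)

Definition mxpow (C : numClosedFieldType) (p : nat) (A : 'M[C]_p) (k : nat) : 'M[C]_p :=
  iter k (mulmx A) 1%:M.

(* Right action of a permutation a (identified with the permutation matrix
   P_a = [delta_{i a, j}] = perm_mx a) by conjugation: d^a = P_a^-1 d P_a. *)
Definition mxact (C : numClosedFieldType) (p : nat) (d : 'M[C]_p) (a : 'S_p) : 'M[C]_p :=
  invmx (perm_mx a) *m d *m perm_mx a.

Definition inDq (C : numClosedFieldType) (p q : nat) (A : 'M[C]_p) : Prop :=
  [/\ is_diag_mx A, A \in unitmx & exists n, mxpow A (q ^ n) = 1%:M].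

Definition inX3 (C : numClosedFieldType) (p : nat) (A : 'M[C]_p) : Prop :=
  inDq 3 A /\ \det A = 1.

Definition cocycle (C : numClosedFieldType) (p : nat) (M : 'M[C]_p -> Prop)
  (f : 'S_p -> 'M[C]_p) : Prop :=
  (forall g, g \in ('Alt_('I_p))%g -> M (f g)) /\
  (forall g h, g \in ('Alt_('I_p))%g -> h \in ('Alt_('I_p))%g ->
     f (g * h)%g = mxact (f g) h *m f h).

Definition coboundary (C : numClosedFieldType) (p : nat) (M : 'M[C]_p -> Prop)
  (f : 'S_p -> 'M[C]_p) : Prop :=
  exists2 m, M m & forall g, g \in ('Alt_('I_p))%g -> f g = invmx m *m mxact m g.

Definition H1_trivial (C : numClosedFieldType) (p : nat) (M : 'M[C]_p -> Prop) : Prop :=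
  forall f, cocycle M f -> coboundary M f.

(* H^1(Alt(p), M) = Z^1/B^1 is cyclic of order n: generated by the class
   of a cocycle f whose class has order exactly n. *)
Definition H1_cyclic_of_order (C : numClosedFieldType) (p : nat) (M : 'M[C]_p -> Prop)
  (n : nat) : Prop :=
  exists f, [/\ cocycle M f,
    (forall k, (0 < k < n)%N -> ~ coboundary M (fun g => mxpow (f g) k)),
    coboundary M (fun g => mxpow (f g) n) &
    (forall z, cocycle M z -> exists k, (k < n)%N /\
       exists2 b, coboundary M b &
         forall g, g \in ('Alt_('I_p))%g -> z g = mxpow (f g) k *m b g)].

(* Shapiro's lemma: as an Alt(p)-module, D_{q} is induced from the trivial action of the
   stabiliser Alt(p-1) of a point z on the q-power roots of unity.  Concretely, a crossed
   homomorphism with diagonal values is a family F g i with F (g h) i = F g (h^-1 i) * F h i,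
   and it is a coboundary as soon as the character h |-> F h z of the stabiliser is trivial.
   A character of Alt(p-1) with q-power values kills every 3-cycle: if q <> 3 because
   3-cycles have order 3, and if p - 1 >= 5 because a 3-cycle is conjugated to its inverse
   by an even involution.  As 3-cycles generate Alt(p-1), H^1(Alt(p), D_{q}) = 0.
   For (p, q) = (5, 3) the stabiliser is Alt(4) = <(1 2 3)> V_4, whose 3-power characters
   are the powers of Alt(4) -> Alt(4)/V_4 = C_3 (checked by computation on its twelve
   elements).  Inducing the faithful one gives a cocycle with values in X_{3} (its
   determinant is a character of the perfect group Alt(5)) generating H^1: any other cocycle
   is a power of it times a coboundary, whose determinant can be normalised to 1 since 3 is
   prime to 5. *)

From HB Require Import structures.
From mathcomp Require Import all_boot all_order all_algebra all_fingroup all_solvable all_field.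
From mathcomp Require Import ring.
Set Implicit Arguments. Unset Strict Implicit. Unset Printing Implicit Defensive.
Import GRing.Theory Num.Theory.
Local Open Scope ring_scope.

Section DiagonalMatrices.
Variables (R : fieldType) (n : nat).
Implicit Types (d e : 'I_n -> R) (A : 'M[R]_n).

Definition dmx d : 'M[R]_n := diag_mx (\row_i d i).

Lemma dmxE d i j : dmx d i j = d i *+ (i == j).
Proof. by rewrite !mxE. Qed.

Lemma dmx_is_diag d : is_diag_mx (dmx d).
Proof. exact: diag_mx_is_diag. Qed.

Lemma diag_dmx A : is_diag_mx A -> A = dmx (fun i => A i i).
Proof.
move/is_diag_mxP=> Adiag; apply/matrixP=> i j; rewrite dmxE.
by have [->|/Adiag->] := eqVneq i j; rewrite ?mulr1n ?mulr0n.
Qed.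

Lemma eq_dmx d e : d =1 e -> dmx d = dmx e.
Proof. by move=> de; apply/matrixP=> i j; rewrite !dmxE de. Qed.

Lemma dmx_inj d e : dmx d = dmx e -> d =1 e.
Proof. by move=> de i; have := congr1 (fun A => A i i) de; rewrite !dmxE eqxx !mulr1n. Qed.

Lemma dmx1 : dmx (fun=> 1) = 1%:M.
Proof. by apply/matrixP=> i j; rewrite dmxE mxE. Qed.

Lemma mul_dmx d e : dmx d *m dmx e = dmx (fun i => d i * e i).
Proof.
apply/matrixP=> i j; rewrite mul_diag_mx !mxE.
by case: eqP; rewrite ?mulr1n ?mulr0n ?mulr0.
Qed.

Lemma det_dmx d : \det (dmx d) = \prod_i d i.
Proof. by rewrite det_diag; apply: eq_bigr => i _; rewrite mxE. Qed.

Lemma unitmx_dmx d : (dmx d \in unitmx) = [forall i, d i != 0].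
Proof.
rewrite unitmxE det_dmx unitfE.
by apply/prodf_neq0/forallP=> nz_d i => [|_]; apply: nz_d.
Qed.

Lemma invmx_dmx d : (forall i, d i != 0) -> invmx (dmx d) = dmx (fun i => (d i)^-1).
Proof.
move=> nz_d; have d_unit : dmx d \in unitmx by rewrite unitmx_dmx; apply/forallP.
have inv_d : dmx (fun i => (d i)^-1) *m dmx d = 1%:M.
  by rewrite mul_dmx -dmx1; apply: eq_dmx => i; rewrite mulVf.
by rewrite -[LHS]mul1mx -inv_d -mulmxA mulmxV // mulmx1.
Qed.

End DiagonalMatrices.

Section PowersOfUnity.
Variable R : nzRingType.
Implicit Types (x y : R) (m n q : nat).

Lemma expr_qpow_mono x q a b : (a <= b)%N -> x ^+ (q ^ a) = 1 -> x ^+ (q ^ b) = 1.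
Proof. by move=> le_ab xa; apply: expr_dvd xa _; rewrite dvdn_exp2l. Qed.

Lemma expr_qpow_neq0 x q k : (0 < q)%N -> x ^+ (q ^ k) = 1 -> x != 0.
Proof.
move=> q_gt0; apply: contra_eq_neq => ->.
by rewrite expr0n expn_eq0 eqn0Ngt q_gt0 /= eq_sym oner_eq0.
Qed.

Lemma uniform_qpow_exponent (I : finType) (x : I -> R) q :
  (forall i, exists k, x i ^+ (q ^ k) = 1) -> exists k, forall i, x i ^+ (q ^ k) = 1.
Proof.
case/fin_all_exists=> k xk; exists (\max_i k i)%N => i.
by apply: expr_qpow_mono (xk i); apply: leq_bigmax.
Qed.

Lemma bezout_expr x m n : (0 < m)%N -> coprime m n -> x ^+ m = 1 ->
  exists a, x * (x ^+ n) ^+ a = 1.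
Proof.
move=> m_gt0 co_mn xm1; have [a _ dvd_m] := Bezoutl n m_gt0.
exists a; rewrite -exprM -exprS; apply: expr_dvd xm1 _.
by move: dvd_m; rewrite (eqP co_mn) add1n mulnC.
Qed.

Lemma expr_coprime_eq1 x m n : coprime m n -> x ^+ m = 1 -> x ^+ n = 1 -> x = 1.
Proof.
move=> co_mn xm1 xn1; have [m0|m_gt0] := posnP m.
  by move: co_mn; rewrite m0 /coprime gcd0n => /eqP n1; rewrite -[x]expr1 -n1.
by have [a] := bezout_expr m_gt0 co_mn xm1; rewrite xn1 expr1n mulr1.
Qed.

Lemma coprime_root_inv y m n : (0 < m)%N -> coprime m n -> y ^+ m = 1 ->
  exists2 x, x ^+ m = 1 & x ^+ n * y = 1.
Proof.
move=> m_gt0 co_mn ym1; have [a ya] := bezout_expr m_gt0 co_mn ym1.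
exists (y ^+ a); first by rewrite exprAC ym1 expr1n.
by rewrite -exprM -exprSr mulnC exprS exprM.
Qed.

End PowersOfUnity.

Lemma prime_prim_root (R : idomainType) p (z : R) :
  prime p -> z ^+ p = 1 -> z != 1 -> p.-primitive_root z.
Proof.
move=> p_pr zp1 z_neq1; have [m prim_z] := prim_order_exists (prime_gt0 p_pr) zp1.
case/primeP: p_pr => _ /[apply] /orP[/eqP m1|/eqP <- //].
by case/eqP: z_neq1; rewrite -[z]expr1 -m1 (prim_expr_order prim_z).
Qed.

Lemma exists_prim_root3 (C : numClosedFieldType) : exists w : C, 3.-primitive_root w.
Proof.
have [w w2] := @solve_monicpoly C 2 (fun=> -1) isT.
rewrite !big_ord_recr big_ord0 /= add0r !mulN1r expr1 expr0 in w2.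
have w3 : w ^+ 3 = 1.
  apply/eqP; rewrite -subr_eq0; apply/eqP.
  by transitivity ((w - 1) * (w ^+ 2 + w + 1)); [ring | rewrite w2; ring].
exists w; apply: prime_prim_root w3 _ => //; apply/eqP => w1.
have : 3%:R == 0 :> C.
  by apply/eqP; transitivity (w ^+ 2 + w + 1); [rewrite w1; ring | rewrite w2; ring].
by rewrite pnatr_eq0.
Qed.

Section Permutations.
Variable T : finType.
Implicit Types (a b c d e z : T) (s : {perm T}) (S : {set T}).
Local Open Scope group_scope.

Lemma perm_on_setC1 z s : perm_on [set~ z] s = (s z == z).
Proof.
apply/subsetP/eqP=> [s_on | sz x]; last by rewrite !inE; apply: contra => /eqP->; apply/eqP.
by apply/eqP/negPn/negP => /s_on; rewrite !inE eqxx.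
Qed.

Lemma prod_tperm_on S s : perm_on S s ->
  exists2 ts : seq (T * T), s = \prod_(t <- ts) tperm t.1 t.2 &
    all (fun t => [&& t.1 != t.2, t.1 \in S & t.2 \in S]) ts.
Proof.
have [m] := ubnP #|[pred y | s y != y]|; elim: m s => // m IHm s /ltnSE-le_s_m s_on.
case: (pickP (fun y => s y != y)) => [x s_x | s_id]; last first.
  by exists nil; rewrite // big_nil; apply/permP=> y; apply/eqP/idPn; rewrite perm1 s_id.
have Sx : x \in S by apply: contraR s_x => /(out_perm s_on)->.
have Ssx : s x \in S by rewrite (perm_closed _ s_on).
pose s' := s * tperm x (s x).
have moved_s' : [pred y | s' y != y] \subset [predD1 [pred y | s y != y] & x].
  apply/subsetP=> y; rewrite !inE permM; have [-> | yx] := eqVneq y x; first by rewrite tpermR eqxx.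
  apply: contraNN => /eqP sy; have sx_y : s x != y by rewrite -sy (inj_eq perm_inj) eq_sym.
  by rewrite sy tpermD // eq_sym.
have [||ts def_s' ts_S] := IHm s'.
- rewrite (cardD1 x) inE s_x in le_s_m.
  exact: leq_ltn_trans (subset_leq_card moved_s') le_s_m.
- apply: (perm_onM s_on); apply: subset_trans (tperm_on _ _) _.
  by apply/subsetP=> y; rewrite !inE => /orP[]/eqP->.
exists (rcons ts (x, s x)); last by rewrite all_rcons /= eq_sym s_x Sx Ssx ts_S.
by rewrite big_rcons /= -def_s' -mulgA tperm2 mulg1.
Qed.

Lemma even_perm_on_ind S (P : {perm T} -> Prop) :
  P 1 ->
  (forall a b c d s, a \in S -> b \in S -> c \in S -> d \in S -> a != b -> c != d ->
     P s -> P (tperm a b * tperm c d * s)) ->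
  forall s, s \in 'Alt_T -> perm_on S s -> P s.
Proof.
move=> P1 PM s; rewrite Alt_even => s_even /prod_tperm_on[ts def_s ts_S].
have ts_dpair : all dpair ts by apply: sub_all ts_S => t /and3P[].
move: s_even; rewrite def_s odd_perm_prod {s def_s ts_dpair}//.
have [k] := ubnP (size ts); elim: k ts ts_S => // k IH [|[a b] [|[c d] ts]] //=.
  by rewrite big_nil.
move=> /and3P[/and3P[ab Sa Sb] /and3P[cd Sc Sd] ts_S] /ltnSE/ltnW size_ts.
rewrite negbK => ts_even.
by rewrite !big_cons mulgA; apply: PM => //; apply: IH.
Qed.

Lemma exists_notin (A : {set T}) (r : seq T) : (size r < #|A|)%N -> exists2 x, x \in A & x \notin r.
Proof.
move=> lt_r_A; apply/subsetPn; apply: contraTN lt_r_A => /subset_leq_card le_A_r.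
by rewrite -leqNgt (leq_trans le_A_r) ?card_size.
Qed.

Definition cycle3 a b c : {perm T} := tperm a b * tperm b c.

Lemma tpermM_conj a b s : tperm a b * s = s * tperm (s a) (s b).
Proof. by rewrite conjgC tpermJ. Qed.

Lemma tperm_braid a b c : uniq [:: a; b; c] -> tperm b c * tperm a b = tperm a b * tperm a c.
Proof.
by rewrite /= !inE negb_or andbT => /andP[/andP[ab ac] bc]; rewrite tpermM_conj tpermR tpermD.
Qed.

Lemma cycle3_sq a b c : uniq [:: a; b; c] -> cycle3 a b c * cycle3 a b c = (cycle3 a b c)^-1.
Proof.
move=> abc; have braid := tperm_braid abc.
rewrite /cycle3 invMg !tpermV braid -mulgA [tperm b c * _]mulgA braid !mulgA tperm2 mul1g.
move: abc; rewrite /= !inE negb_or andbT => /andP[/andP[ab ac] bc].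
by rewrite [RHS]tpermM_conj tpermL (tpermD ab) 1?eq_sym // (tpermC c b).
Qed.

Lemma cycle3_expg3 a b c : uniq [:: a; b; c] -> cycle3 a b c ^+ 3 = 1.
Proof. by move=> abc; rewrite !expgS expg0 mulg1 cycle3_sq // mulgV. Qed.

Lemma cycle3J a b c d e : uniq [:: a; b; c] -> d \notin [:: a; b; c] -> e \notin [:: a; b; c] ->
  cycle3 a b c ^ (tperm a b * tperm d e) = (cycle3 a b c)^-1.
Proof.
move=> abc; rewrite !inE !negb_or => /and3P[da db dc] /and3P[ea eb ec].
rewrite /cycle3 conjMg !tpermJ !permM tpermL tpermR !(tpermD da ea, tpermD db eb).
move: (abc); rewrite /= !inE negb_or andbT => /andP[/andP[ab ac] bc].
by rewrite (tpermD ac bc) (tpermD dc ec) invMg !tpermV tperm_braid // tpermC.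
Qed.

Lemma tpermM_cycle3 a b c d : tperm a b * tperm c d = cycle3 a b c * cycle3 b c d.
Proof. by rewrite /cycle3 -mulgA (mulgA (tperm b c)) tperm2 mul1g. Qed.

Lemma tpermM_Alt a b c d : a != b -> c != d -> tperm a b * tperm c d \in 'Alt_T.
Proof. by move=> ab cd; rewrite Alt_even odd_permM !odd_tperm ab cd. Qed.

Lemma Alt_trans a b : (3 < #|T|)%N -> exists2 s, s \in 'Alt_T & s a = b.
Proof.
move=> T_gt3; have [-> | ab] := eqVneq a b; first by exists 1; rewrite ?group1 ?perm1.
have [|c _] := @exists_notin [set: T] [:: a; b]; first by rewrite cardsT; apply: ltnW.
have [|d _] := @exists_notin [set: T] [:: a; b; c]; first by rewrite cardsT.
rewrite !inE !negb_or => /and3P[da db dc] /andP[ca cb].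
exists (tperm a b * tperm c d); last by rewrite permM tpermL tpermD // eq_sym.
by rewrite tpermM_Alt // eq_sym.
Qed.

End Permutations.

Section AltCharacters.
Variables (R : fieldType) (T : finType) (K : {group {perm T}}) (chi : {perm T} -> R).
Hypothesis chiM : {in K &, {morph chi : x y / (x * y)%g >-> x * y}}.
Hypothesis chi_neq0 : {in K, forall x, chi x != 0}.

Lemma char1 : chi 1%g = 1.
Proof. by apply: (mulfI (chi_neq0 (group1 K))); rewrite -chiM ?mulg1 ?mulr1. Qed.

Lemma charX x k : x \in K -> chi (x ^+ k)%g = chi x ^+ k.
Proof.
move=> Kx; elim: k => [|k IH]; first by rewrite expg0 char1.
by rewrite expgS chiM ?groupX // IH exprS.
Qed.

Lemma charV x : x \in K -> chi x^-1%g = (chi x)^-1.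
Proof.
move=> Kx; apply: (mulfI (chi_neq0 Kx)); rewrite -chiM ?groupV // mulgV char1.
by rewrite mulfV ?chi_neq0.
Qed.

Lemma charJ x u : x \in K -> u \in K -> chi (x ^ u)%g = chi x.
Proof.
move=> Kx Ku; rewrite conjgE !chiM ?groupM ?groupV // charV // mulrCA.
by rewrite mulVf ?chi_neq0 ?mulr1.
Qed.

Lemma char_eq1_conj_inv x u : x \in K -> u \in K -> (x ^ u = x^-1)%g -> (x ^+ 3 = 1)%g ->
  chi x = 1.
Proof.
move=> Kx Ku xJu x3; apply: (@expr_coprime_eq1 _ _ 2 3) => //.
  by rewrite expr2 -{1}(charJ Kx Ku) xJu charV // mulVf ?chi_neq0.
by rewrite -charX // x3 char1.
Qed.

Variable S : {set T}.
Hypothesis K_tpermM : forall a b c d, a \in S -> b \in S -> c \in S -> d \in S ->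
  a != b -> c != d -> (tperm a b * tperm c d)%g \in K.

Lemma cycle3_in a b c : {subset [:: a; b; c] <= S} -> a != b -> b != c -> cycle3 a b c \in K.
Proof. by move=> abc_S ab bc; apply: K_tpermM; rewrite // abc_S // !inE eqxx ?orbT. Qed.

Lemma cycle3_char_expr3 a b c : {subset [:: a; b; c] <= S} -> uniq [:: a; b; c] ->
  chi (cycle3 a b c) ^+ 3 = 1.
Proof.
move=> abc_S abc; have Kabc : cycle3 a b c \in K.
  by move: abc; rewrite /= !inE negb_or andbT => /andP[/andP[ab _] bc]; apply: cycle3_in.
by rewrite -charX // cycle3_expg3 // char1.
Qed.

Lemma cycle3_char_eq1 a b c : (4 < #|S|)%N -> {subset [:: a; b; c] <= S} -> uniq [:: a; b; c] ->
  chi (cycle3 a b c) = 1.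
Proof.
move=> S_gt4 abc_S abc; have [ab bc] : a != b /\ b != c.
  by move: abc; rewrite /= !inE negb_or andbT => /andP[/andP[]].
have [|d Sd d_abc] := @exists_notin _ S [:: a; b; c]; first exact: ltnW.
have [|e Se] := @exists_notin _ S [:: a; b; c; d]; first by [].
rewrite -[[:: a; b; c; d]]/(rcons [:: a; b; c] d) mem_rcons in_cons negb_or.
case/andP=> ed e_abc.
apply: (@char_eq1_conj_inv _ (tperm a b * tperm d e)%g).
- exact: cycle3_in.
- by apply: K_tpermM; rewrite // ?abc_S ?inE ?eqxx ?orbT // eq_sym.
- exact: cycle3J.
- exact: cycle3_expg3.
Qed.

Lemma even_perm_on_char_eq1 :
  (forall a b c, {subset [:: a; b; c] <= S} -> uniq [:: a; b; c] -> chi (cycle3 a b c) = 1) ->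
  {in ('Alt_T)%g, forall s, perm_on S s -> chi s = 1}.
Proof.
move=> chi_cycle3; have chi_cycle3' a b c : a \in S -> b \in S -> c \in S ->
    a != b -> b != c -> chi (cycle3 a b c) = 1.
  move=> Sa Sb Sc ab bc; have [<-|ac] := eqVneq a c.
    by rewrite /cycle3 tpermC tperm2 char1.
  apply: chi_cycle3; first by apply/allP; rewrite /= Sa Sb Sc.
  by rewrite /= !inE negb_or ab ac bc.
suff KS : forall s, s \in ('Alt_T)%g -> perm_on S s -> s \in K /\ chi s = 1.
  by move=> s s_even /(KS s s_even)[].
apply: (@even_perm_on_ind _ S (fun s => s \in K /\ chi s = 1)).
  by rewrite group1 char1.
move=> a b c d s Sa Sb Sc Sd ab cd [Ks chis].
split; first by rewrite groupM ?K_tpermM.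
rewrite chiM ?K_tpermM // chis mulr1.
have [bc|bc] := eqVneq b c; first by subst b; apply: chi_cycle3'.
have abc_S : {subset [:: a; b; c] <= S} by apply/allP; rewrite /= Sa Sb Sc.
have bcd_S : {subset [:: b; c; d] <= S} by apply/allP; rewrite /= Sb Sc Sd.
by rewrite tpermM_cycle3 chiM ?cycle3_in // !chi_cycle3' ?mulr1.
Qed.

End AltCharacters.

Lemma Alt_char_eq1 (R : fieldType) (T : finType) (chi : {perm T} -> R) : (4 < #|T|)%N ->
    {in ('Alt_T)%g &, {morph chi : x y / (x * y)%g >-> x * y}} ->
    {in ('Alt_T)%g, forall x, chi x != 0} ->
  {in ('Alt_T)%g, forall x, chi x = 1}.
Proof.
move=> T_gt4 chiM chi_neq0 x Ax.
have K_tpermM a b c d : a \in [set: T] -> b \in [set: T] -> c \in [set: T] -> d \in [set: T] ->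
  a != b -> c != d -> (tperm a b * tperm c d)%g \in ('Alt_T)%G by move=> *; apply: tpermM_Alt.
apply: (even_perm_on_char_eq1 chiM chi_neq0 K_tpermM) => //.
  by move=> a b c; apply: (cycle3_char_eq1 chiM chi_neq0 K_tpermM); rewrite cardsT.
by apply/subsetP => y; rewrite inE.
Qed.

Section Shapiro.
Variables (R : fieldType) (T : finType).
Implicit Types (F G : {perm T} -> T -> R) (psi : {perm T} -> R) (g h : {perm T}) (z i j : T).

Definition alt_stab z : {group {perm T}} := 'C_('Alt_T)[z | 'P]%G.

Lemma alt_stabE z s : (s \in alt_stab z) = (s \in 'Alt_T)%g && (s z == z).
Proof. by rewrite in_setI; congr andb; apply/astab1P/eqP. Qed.

Lemma tpermM_alt_stab z a b c d : a \in [set~ z] -> b \in [set~ z] -> c \in [set~ z] ->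
  d \in [set~ z] -> a != b -> c != d -> (tperm a b * tperm c d)%g \in alt_stab z.
Proof.
rewrite !in_setC1 => az bz cz dz ab cd; rewrite alt_stabE tpermM_Alt //=.
by rewrite permM (tpermD az bz) (tpermD cz dz) eqxx.
Qed.

(* The junk value 1 only occurs when Alt_T is not transitive, which [T_gt3] excludes. *)
Definition alt_to z j : {perm T} :=
  if j == z then 1%g else odflt 1%g [pick s in ('Alt_T)%g | s j == z].

Lemma alt_to_id z : alt_to z z = 1%g.
Proof. by rewrite /alt_to eqxx. Qed.

Hypothesis T_gt3 : (3 < #|T|)%N.

Lemma alt_toP z j : alt_to z j \in ('Alt_T)%g /\ alt_to z j j = z.
Proof.
rewrite /alt_to; have [->|_] := eqVneq j z; first by rewrite group1 perm1.
case: pickP => [s /andP[s_even /eqP] | no_s] //=.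
by have [s s_even sjz] := Alt_trans j z T_gt3; have := no_s s; rewrite s_even sjz eqxx.
Qed.

(* Conjugation by the permutation matrix of h maps diag d to diag (d \o h^-1), so
   g |-> dmx (F g) is a crossed homomorphism on Alt_T exactly when F is a diag_cocycle. *)
Definition diag_cocycle F :=
  {in ('Alt_T)%g &, forall g h i, F (g * h)%g i = F g (h^-1%g i) * F h i}.

Lemma diag_cocycleM F G :
  diag_cocycle F -> diag_cocycle G -> diag_cocycle (fun g i => F g i * G g i).
Proof. by move=> cF cG g h Ag Ah i; rewrite cF // cG // mulrACA. Qed.

Lemma diag_cocycleX F k : diag_cocycle F -> diag_cocycle (fun g i => F g i ^+ k).
Proof. by move=> cF g h Ag Ah i; rewrite cF // exprMn. Qed.

Lemma diag_cocycleV F : diag_cocycle F -> diag_cocycle (fun g i => (F g i)^-1).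
Proof. by move=> cF g h Ag Ah i; rewrite cF // invfM. Qed.

Lemma diag_cocycle_prod F : diag_cocycle F ->
  {in ('Alt_T)%g &, {morph (fun g => \prod_i F g i) : g h / (g * h)%g >-> g * h}}.
Proof.
move=> cF g h Ag Ah /=; under eq_bigr do rewrite cF //.
by rewrite big_split /= [X in _ = X * _](reindex_inj (@perm_inj _ h^-1%g)).
Qed.

Lemma diag_cocycle_stab F z : diag_cocycle F ->
  {in alt_stab z &, {morph F^~ z : x y / (x * y)%g >-> x * y}}.
Proof.
move=> cF x y; rewrite !alt_stabE => /andP[Ax _] /andP[Ay /eqP yz] /=.
by rewrite cF // -{1}yz permK.
Qed.

Lemma diag_cocycle_coboundary F z : diag_cocycle F -> {in ('Alt_T)%g, forall g i, F g i != 0} ->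
    {in alt_stab z, forall h, F h z = 1} ->
  {in ('Alt_T)%g, forall g i, F g i = (F (alt_to z i) z)^-1 * F (alt_to z (g^-1%g i)) z}.
Proof.
move=> cF F_neq0 F_stab g Ag i.
have [As si] := alt_toP z i; have [At tgi] := alt_toP z (g^-1%g i).
set s := alt_to z i in As si *; set t := alt_to z (g^-1%g i) in At tgi *.
set u := (t^-1 * (g * s))%g; have Au : u \in ('Alt_T)%g by rewrite !groupM ?groupV.
have uz : u z = z by rewrite !permM -{1}tgi permK permKV si.
have gsE : F (g * s)%g z = F g i * F s z by rewrite cF ?groupM // -si permK.
have gstE : F (g * s)%g z = F t z.
  have u_stab : u \in alt_stab z by rewrite alt_stabE Au uz eqxx.
  by rewrite -[(g * s)%g](mulKVg t) -/u cF // F_stab // mulr1 -{1}uz permK.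
by rewrite -gstE gsE mulrC mulfK ?F_neq0.
Qed.

Definition ind_cocycle z psi g i : R :=
  psi ((alt_to z (g^-1%g i))^-1 * g * alt_to z i)%g.

Lemma ind_cocycle_stab z g i : g \in ('Alt_T)%g ->
  ((alt_to z (g^-1%g i))^-1 * g * alt_to z i)%g \in alt_stab z.
Proof.
move=> Ag; have [As si] := alt_toP z i; have [At tgi] := alt_toP z (g^-1%g i).
set s := alt_to z i in As si *; set t := alt_to z (g^-1%g i) in At tgi *.
by rewrite alt_stabE !groupM ?groupV //= !permM -{1}tgi permK permKV si.
Qed.

Lemma diag_cocycle_ind z psi : {in alt_stab z &, {morph psi : x y / (x * y)%g >-> x * y}} ->
  diag_cocycle (ind_cocycle z psi).
Proof.
move=> psiM g h Ag Ah i; rewrite /ind_cocycle -psiM ?ind_cocycle_stab //.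
by rewrite invMg permM !mulgA mulgK.
Qed.

Lemma ind_cocycle_stabE z psi h : h \in alt_stab z -> ind_cocycle z psi h z = psi h.
Proof.
rewrite alt_stabE /ind_cocycle => /andP[_ /eqP hz].
have hVz : h^-1%g z = z by rewrite -{1}hz permK.
by rewrite hVz alt_to_id invg1 mul1g mulg1.
Qed.

Lemma diag_cocycle_coboundary_qpow F z q :
    diag_cocycle F -> {in ('Alt_T)%g, forall g i, F g i != 0} ->
    {in ('Alt_T)%g, forall g, exists k, forall i, F g i ^+ (q ^ k) = 1} ->
    {in alt_stab z, forall h, F h z = 1} ->
  exists2 m : T -> R, exists k, forall j, m j ^+ (q ^ k) = 1 &
    {in ('Alt_T)%g, forall g i, F g i = (m i)^-1 * m (g^-1%g i)}.
Proof.
move=> cF F_neq0 Fq F_stab; exists (fun j => F (alt_to z j) z); last exact: diag_cocycle_coboundary.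
apply: uniform_qpow_exponent => j; have [Aj _] := alt_toP z j.
by have [k Fk] := Fq _ Aj; exists k.
Qed.

End Shapiro.

Section DiagonalCocycles.
Variables (C : numClosedFieldType) (n : nat).
Implicit Types (d m : 'I_n -> C) (A : 'M[C]_n) (M : 'M[C]_n -> Prop) (F : 'S_n -> 'I_n -> C).
Implicit Types (f : 'S_n -> 'M[C]_n) (s : 'S_n).

Lemma mxact_dmx d s : mxact (dmx d) s = dmx (fun i => d (s^-1%g i)).
Proof.
have invP : invmx (perm_mx s : 'M[C]_n) = perm_mx s^-1%g.
  have sVs : perm_mx s^-1%g *m perm_mx s = 1%:M :> 'M[C]_n by rewrite -perm_mxM mulVg perm_mx1.
  by rewrite -[LHS]mul1mx -sVs -mulmxA mulmxV ?unitmx_perm // mulmx1.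
rewrite /mxact invP -row_permE -[s in perm_mx s]invgK -col_permE.
by apply/matrixP=> i j; rewrite !mxE (inj_eq perm_inj).
Qed.

Lemma mxpow_dmx d k : mxpow (dmx d) k = dmx (fun i => d i ^+ k).
Proof.
elim: k => [|k IH]; first by rewrite /mxpow /= -dmx1; apply: eq_dmx => i.
by rewrite /mxpow iterS -/(mxpow _ _) IH mul_dmx; apply: eq_dmx => i; rewrite exprS.
Qed.

Lemma cocycle_dmxP M f : (forall A, M A -> is_diag_mx A /\ A \in unitmx) -> cocycle M f ->
  [/\ {in ('Alt_('I_n))%g, forall g, f g = dmx (fun i => f g i i)},
      {in ('Alt_('I_n))%g, forall g i, f g i i != 0} & diag_cocycle (fun g i => f g i i)].
Proof.
move=> M_diag [fM fJ]; have fE g : g \in ('Alt_('I_n))%g -> f g = dmx (fun i => f g i i).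
  by move=> Ag; apply: diag_dmx; case: (M_diag _ (fM g Ag)).
split=> // [g Ag i | g h Ag Ah].
  by have [_] := M_diag _ (fM g Ag); rewrite {1}(fE g Ag) unitmx_dmx => /forallP.
apply: dmx_inj; rewrite -fE ?groupM // fJ // {1}(fE g) // {1}(fE h) //.
by rewrite mxact_dmx mul_dmx.
Qed.

Lemma cocycle_dmx M F : {in ('Alt_('I_n))%g, forall g, M (dmx (F g))} -> diag_cocycle F ->
  cocycle M (fun g => dmx (F g)).
Proof.
by move=> FM cF; split=> // g h Ag Ah; rewrite mxact_dmx mul_dmx; apply: eq_dmx => i; apply: cF.
Qed.

Lemma coboundary_dmx M f m : M (dmx m) -> (forall i, m i != 0) ->
    {in ('Alt_('I_n))%g, forall g, f g = dmx (fun i => (m i)^-1 * m (g^-1%g i))} ->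
  coboundary M f.
Proof.
by move=> Mm m_neq0 fE; exists (dmx m) => // g Ag; rewrite fE // invmx_dmx // mxact_dmx mul_dmx.
Qed.

Lemma inDq_diag_unit q A : inDq q A -> is_diag_mx A /\ A \in unitmx.
Proof. by case. Qed.

Lemma inDq_dmx q k d : (0 < q)%N -> (forall i, d i ^+ (q ^ k) = 1) -> inDq q (dmx d).
Proof.
move=> q_gt0 dq; split; first exact: dmx_is_diag.
  by rewrite unitmx_dmx; apply/forallP=> i; apply: expr_qpow_neq0 q_gt0 (dq i).
by exists k; rewrite mxpow_dmx -dmx1; apply: eq_dmx.
Qed.

Lemma inDq_diag_expr q A : inDq q A -> exists k, forall i, A i i ^+ (q ^ k) = 1.
Proof.
case=> A_diag _ [k Ak]; exists k => i.
by move: Ak; rewrite [A in mxpow A _](diag_dmx A_diag) mxpow_dmx -dmx1 => /dmx_inj/(_ i).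
Qed.

Lemma Dq_coboundary q m f : (0 < q)%N -> (exists k, forall j, m j ^+ (q ^ k) = 1) ->
    {in ('Alt_('I_n))%g, forall g, f g = dmx (fun i => (m i)^-1 * m (g^-1%g i))} ->
  coboundary (inDq q) f.
Proof.
move=> q_gt0 [k mq]; apply: coboundary_dmx; first exact: inDq_dmx q_gt0 mq.
by move=> j; apply: expr_qpow_neq0 q_gt0 (mq j).
Qed.

(* Replacing m by x * m, with x ^+ n * \prod m = 1, keeps the coboundary and makes its
   determinant 1; such an x exists since 3 is prime to n. *)
Lemma X3_coboundary m f : coprime 3 n -> (exists k, forall j, m j ^+ (3 ^ k) = 1) ->
    {in ('Alt_('I_n))%g, forall g, f g = dmx (fun i => (m i)^-1 * m (g^-1%g i))} ->
  coboundary (@inX3 C n) f.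
Proof.
move=> co3n [k m3] fE; pose y := \prod_j m j.
have y3 : y ^+ (3 ^ k) = 1 by rewrite -prodrXl; apply: big1 => j _.
have [x x3 xy] := coprime_root_inv (expn_gt0 3 k) (coprimeXl k co3n) y3.
have m_neq0 j : m j != 0 by apply: expr_qpow_neq0 (m3 j).
have x_neq0 : x != 0 by apply: expr_qpow_neq0 x3.
apply: (coboundary_dmx (m := fun j => x * m j)) => [|j|g Ag]; last 2 first.
- by rewrite mulf_neq0.
- by rewrite fE //; apply: eq_dmx => i; rewrite invfM mulrACA mulVf ?mul1r.
split; first by apply: (inDq_dmx (k := k)) => // j; rewrite exprMn x3 m3 mulr1.
by rewrite det_dmx big_split /= prodr_const card_ord.
Qed.

End DiagonalCocycles.

Lemma alt_stab_qchar_eq1 (R : fieldType) (T : finType) (z : T) (chi : {perm T} -> R) q :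
    prime q -> q != 3%N \/ (5 < #|T|)%N ->
    {in alt_stab z &, {morph chi : x y / (x * y)%g >-> x * y}} ->
    {in alt_stab z, forall x, chi x != 0} ->
    {in alt_stab z, forall x, exists k, chi x ^+ (q ^ k) = 1} ->
  {in alt_stab z, forall x, chi x = 1}.
Proof.
move=> q_pr q_T chiM chi_neq0 chi_q.
have K_tpermM := @tpermM_alt_stab _ z.
move=> x; rewrite alt_stabE => /andP[Ax xz]; rewrite -perm_on_setC1 in xz.
apply: (even_perm_on_char_eq1 chiM chi_neq0 K_tpermM) => // a b c abc_S abc.
case: q_T => [q_neq3 | T_gt5]; last first.
  apply: (cycle3_char_eq1 chiM chi_neq0 K_tpermM) => //.
  by rewrite cardsC1 -ltnS prednK // (ltn_trans _ T_gt5).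
have [ab bc] : a != b /\ b != c.
  by move: abc; rewrite /= !inE negb_or andbT => /andP[/andP[]].
have [k ck] := chi_q _ (cycle3_in K_tpermM abc_S ab bc).
apply: (@expr_coprime_eq1 _ _ 3 (q ^ k)) => //.
  by rewrite coprimeXr // prime_coprime // dvdn_prime2 // eq_sym.
exact: (cycle3_char_expr3 chiM chi_neq0 K_tpermM).
Qed.

Theorem H1_Dq_trivial (C : numClosedFieldType) p q : prime p -> (5 <= p)%N -> prime q ->
  (p, q) <> (5%N, 3%N) -> H1_trivial (@inDq C p q).
Proof.
move=> p_pr p_ge5 q_pr pq_ne f cf.
have [fE f_neq0 cF] := cocycle_dmxP (@inDq_diag_unit C p q) cf.
have Fq g : g \in ('Alt_('I_p))%g -> exists k, forall i, f g i i ^+ (q ^ k) = 1.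
  by move=> Ag; apply: inDq_diag_expr (cf.1 g Ag).
have p_gt3 : (3 < #|'I_p|)%N by rewrite card_ord ltnW.
pose z : 'I_p := Ordinal (prime_gt0 p_pr).
have f_stab : {in alt_stab z, forall h, f h z z = 1}.
  apply: (alt_stab_qchar_eq1 q_pr _ (diag_cocycle_stab cF)) => [|h|h].
  - have [q3 | ] := eqVneq q 3; [right | by left].
    by rewrite card_ord ltn_neqAle p_ge5 andbT; apply: contra_not_neq pq_ne => <-; rewrite q3.
  - by rewrite alt_stabE => /andP[Ah _]; apply: f_neq0.
  - by rewrite alt_stabE => /andP[/Fq[k Fk] _]; exists k.
have [m mq FE] := diag_cocycle_coboundary_qpow p_gt3 cF f_neq0 Fq f_stab.
by apply: (Dq_coboundary (prime_gt0 q_pr) mq) => g Ag; rewrite fE //; apply: eq_dmx => i; apply: FE.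
Qed.

Section PermSeq.
Variable n : nat.
Implicit Types (s t : 'S_n) (u v : seq nat).

(* Permutations as lists of images, on which vm_compute can check the finitely many facts
   about Alt(4) used below. *)
Definition pseq s : seq nat := [seq val (s i) | i <- enum 'I_n].

Definition seq_mul u v : seq nat := [seq nth 0 v k | k <- u].

Definition seq_tperm (a b : nat) : seq nat :=
  [seq if i == a then b else if i == b then a else i | i <- iota 0 n].

Lemma nth_pseq s (i : 'I_n) : nth 0 (pseq s) i = val (s i).
Proof. by rewrite (nth_map i) ?size_enum_ord // nth_ord_enum. Qed.

Lemma pseq_inj : injective pseq.
Proof. by move=> s t st; apply/permP=> i; apply: val_inj; rewrite -!nth_pseq st. Qed.

Lemma pseqM s t : pseq (s * t)%g = seq_mul (pseq s) (pseq t).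
Proof. by rewrite /seq_mul -map_comp; apply: eq_map => i /=; rewrite nth_pseq permM. Qed.

Lemma pseq1 : pseq 1%g = iota 0 n.
Proof. by rewrite -val_enum_ord; apply: eq_map => i; rewrite perm1. Qed.

Lemma pseq_tperm (a b : 'I_n) : pseq (tperm a b) = seq_tperm a b.
Proof.
rewrite /seq_tperm -val_enum_ord -map_comp; apply: eq_map => i /=.
case: tpermP => [->|->|/eqP ia /eqP ib]; rewrite ?eqxx //; first by case: eqP => // ->.
by rewrite !val_eqE (negPf ia) (negPf ib).
Qed.

End PermSeq.

Arguments pseq {n} s.
Arguments pseq_inj {n}.

Definition c123 : 'S_5 := cycle3 (inZp 1) (inZp 2) (inZp 3).

Definition klein4 : seq 'S_5 :=
  [:: 1; tperm (inZp 1) (inZp 2) * tperm (inZp 3) (inZp 4);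
      tperm (inZp 1) (inZp 3) * tperm (inZp 2) (inZp 4);
      tperm (inZp 1) (inZp 4) * tperm (inZp 2) (inZp 3)]%g.

Definition stab5_enum : seq 'S_5 := [seq (c123 ^+ k * v)%g | k <- iota 0 3, v <- klein4].

(* The position of c123 ^+ k * v in stab5_enum is 4 k + (index of v in klein4). *)
Definition stab5_exp (h : 'S_5) : nat := (index h stab5_enum %/ 4)%N.

Definition klein4_seq : seq (seq nat) :=
  [:: iota 0 5; seq_mul (seq_tperm 5 1 2) (seq_tperm 5 3 4);
      seq_mul (seq_tperm 5 1 3) (seq_tperm 5 2 4); seq_mul (seq_tperm 5 1 4) (seq_tperm 5 2 3)].

Definition c123_seq : seq nat := seq_mul (seq_tperm 5 1 2) (seq_tperm 5 2 3).

Definition stab5_seq : seq (seq nat) :=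
  [seq seq_mul (iter k (seq_mul^~ c123_seq) (iota 0 5)) v | k <- iota 0 3, v <- klein4_seq].

Lemma pseq_c123 : pseq c123 = c123_seq.
Proof. by rewrite pseqM !pseq_tperm. Qed.

Lemma map_pseq_klein4 : map pseq klein4 = klein4_seq.
Proof. by rewrite /= pseq1 !pseqM !pseq_tperm. Qed.

Lemma map_pseq_stab5 : map pseq stab5_enum = stab5_seq.
Proof.
rewrite map_allpairs /stab5_seq -map_pseq_klein4 allpairs_mapr; apply: eq_allpairs => k v /=.
rewrite pseqM -pseq_c123; congr seq_mul; elim: k => [|k IH]; first by rewrite pseq1.
by rewrite expgSr pseqM IH.
Qed.

Lemma stab5_seq_closed (a b c d : 'I_5) t :
    a != ord0 -> b != ord0 -> c != ord0 -> d != ord0 -> a != b -> c != d -> t \in stab5_seq ->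
  seq_mul (seq_mul (seq_tperm 5 a b) (seq_tperm 5 c d)) t \in stab5_seq.
Proof.
have closed : all (fun a => all (fun b => all (fun c => all (fun d =>
    (a != b) && (c != d) ==>
    all (fun t => seq_mul (seq_mul (seq_tperm 5 a b) (seq_tperm 5 c d)) t \in stab5_seq) stab5_seq)
  (iota 1 4)) (iota 1 4)) (iota 1 4)) (iota 1 4) by vm_compute.
have in_iota (x : 'I_5) : x != ord0 -> val x \in iota 1 4.
  move=> x0; rewrite mem_iota ltn_ord andbT lt0n.
  by apply: contra x0 => /eqP x_0; apply/eqP/val_inj.
move=> /in_iota a14 /in_iota b14 /in_iota c14 /in_iota d14 ab cd.
move: closed => /allP/(_ _ a14)/allP/(_ _ b14)/allP/(_ _ c14)/allP/(_ _ d14).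
by rewrite !val_eqE ab cd => /allP; apply.
Qed.

Lemma pseq_stab5 (h : 'S_5) : h \in alt_stab ord0 -> pseq h \in stab5_seq.
Proof.
rewrite alt_stabE -perm_on_setC1 => /andP[].
apply: (@even_perm_on_ind _ _ (fun h => pseq h \in stab5_seq)); first by rewrite pseq1.
move=> a b c d s; rewrite !in_setC1 !pseqM !pseq_tperm; exact: stab5_seq_closed.
Qed.

Lemma stab5_enumP (h : 'S_5) : h \in alt_stab ord0 -> h \in stab5_enum.
Proof. by rewrite -(mem_map pseq_inj) map_pseq_stab5; apply: pseq_stab5. Qed.

Lemma c123_stab : c123 \in alt_stab ord0.
Proof. by apply: tpermM_alt_stab; rewrite ?in_setC1. Qed.

Lemma klein4_stab : {subset klein4 <= alt_stab ord0}.
Proof. by apply/allP; rewrite /= group1 !tpermM_alt_stab ?in_setC1. Qed.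

Lemma klein4_sq v : v \in klein4 -> (v * v = 1)%g.
Proof.
have sq : all (fun v => seq_mul v v == iota 0 5) klein4_seq by vm_compute.
move=> kv; apply: pseq_inj; rewrite pseqM pseq1; apply/eqP; move/allP: sq; apply.
by rewrite -map_pseq_klein4 map_f.
Qed.

Lemma stab5_decomp (h : 'S_5) : h \in alt_stab ord0 ->
  exists k, exists2 v, v \in klein4 & h = (c123 ^+ k * v)%g.
Proof. by move/stab5_enumP/allpairsP=> [[k v] [_ kv ->]]; exists k, v. Qed.

Lemma stab5_expM : {in alt_stab ord0 &, forall x y,
  stab5_exp (x * y)%g = ((stab5_exp x + stab5_exp y) %% 3)%N}.
Proof.
have hom : all (fun x => all (fun y =>
    (index (seq_mul x y) stab5_seq %/ 4
       == (index x stab5_seq %/ 4 + index y stab5_seq %/ 4) %% 3)%N)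
  stab5_seq) stab5_seq by vm_compute.
move=> x y /pseq_stab5 Sx /pseq_stab5 Sy; rewrite /stab5_exp.
rewrite -!(index_map pseq_inj) map_pseq_stab5 pseqM; apply/eqP.
by move/allP: hom => /(_ _ Sx)/allP/(_ _ Sy).
Qed.

Lemma stab5_exp_c123 : stab5_exp c123 = 1%N.
Proof. by rewrite /stab5_exp -(index_map pseq_inj) map_pseq_stab5 pseq_c123; vm_compute. Qed.

Lemma stab5_char_eq1 (R : fieldType) (chi : 'S_5 -> R) :
    {in alt_stab ord0 &, {morph chi : x y / (x * y)%g >-> x * y}} ->
    {in alt_stab ord0, forall x, chi x != 0} ->
    {in alt_stab ord0, forall x, exists k, chi x ^+ (3 ^ k) = 1} ->
  chi c123 = 1 -> {in alt_stab ord0, forall h, chi h = 1}.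
Proof.
move=> chiM chi_neq0 chi3 chi_c h /stab5_decomp[k [v kv ->]]; have Sv := klein4_stab kv.
rewrite chiM ?groupX ?c123_stab // (charX chiM chi_neq0) ?c123_stab // chi_c expr1n mul1r.
have [a va] := chi3 v Sv; apply: (@expr_coprime_eq1 _ _ 2 (3 ^ a)) => //.
  by rewrite coprimeXr.
by rewrite expr2 -chiM // klein4_sq // (char1 chiM chi_neq0).
Qed.

Definition stab5_char (R : pzRingType) (w : R) (h : 'S_5) : R := w ^+ stab5_exp h.

Lemma stab5_charM (R : pzRingType) (w : R) : w ^+ 3 = 1 ->
  {in alt_stab ord0 &, {morph stab5_char w : x y / (x * y)%g >-> x * y}}.
Proof. by move=> w3 x y Sx Sy; rewrite /stab5_char stab5_expM // expr_mod // exprD. Qed.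

Lemma stab5_char_c123 (R : pzRingType) (w : R) : stab5_char w c123 = w.
Proof. by rewrite /stab5_char stab5_exp_c123 expr1. Qed.

Lemma card_I5_gt3 : (3 < #|'I_5|)%N.
Proof. by rewrite card_ord. Qed.

Section H1X3.
Variables (C : numClosedFieldType) (w : C).
Hypothesis w_prim : 3.-primitive_root w.

Definition H1gen_entry g : 'I_5 -> C := ind_cocycle ord0 (stab5_char w) g.

Definition H1gen g : 'M[C]_5 := dmx (H1gen_entry g).

Lemma diag_cocycle_H1gen : diag_cocycle H1gen_entry.
Proof. exact (diag_cocycle_ind card_I5_gt3 (stab5_charM (prim_expr_order w_prim))). Qed.

Lemma H1gen_entry_expr3 g i : H1gen_entry g i ^+ 3 = 1.
Proof. by rewrite /H1gen_entry /ind_cocycle /stab5_char exprAC (prim_expr_order w_prim) expr1n. Qed.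

Lemma H1gen_entry_neq0 g i : H1gen_entry g i != 0.
Proof. by apply: (@expr_qpow_neq0 _ _ 3 1); rewrite ?expn1 ?H1gen_entry_expr3. Qed.

Lemma H1gen_entry_c123 : H1gen_entry c123 ord0 = w.
Proof. by rewrite /H1gen_entry ind_cocycle_stabE ?c123_stab // stab5_char_c123. Qed.

Lemma H1gen_X3 g : g \in ('Alt_('I_5))%g -> inX3 (H1gen g).
Proof.
move=> Ag; split; first by apply: (inDq_dmx (k := 1)) => // i; rewrite expn1 H1gen_entry_expr3.
rewrite det_dmx; apply: (Alt_char_eq1 (chi := fun g => \prod_i H1gen_entry g i)) => //.
- by rewrite card_ord.
- exact: diag_cocycle_prod diag_cocycle_H1gen.
- by move=> x _; apply/prodf_neq0 => i _; apply: H1gen_entry_neq0.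
Qed.

Lemma cocycle_H1gen : cocycle (@inX3 C 5) H1gen.
Proof. exact: cocycle_dmx H1gen_X3 diag_cocycle_H1gen. Qed.

Lemma coboundary_H1genX k :
  coboundary (@inX3 C 5) (fun g => mxpow (H1gen g) k) <-> (3 %| k)%N.
Proof.
split=> [[M [[M_diag M_unit _] _] ME] | dvd3k].
  have c123_Alt : c123 \in ('Alt_('I_5))%g by have := c123_stab; rewrite alt_stabE => /andP[].
  have c123V0 : (c123^-1)%g ord0 = ord0.
    by have := c123_stab; rewrite alt_stabE => /andP[_ /eqP c0]; rewrite -{1}c0 permK.
  move: M_unit (ME c123 c123_Alt); rewrite (diag_dmx M_diag) unitmx_dmx => /forallP M_neq0.
  rewrite mxpow_dmx invmx_dmx // mxact_dmx mul_dmx => /dmx_inj/(_ ord0).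
  by rewrite H1gen_entry_c123 c123V0 mulVf // (prim_order_dvd w_prim) => ->.
apply: (X3_coboundary (m := fun=> 1)) => //; first by exists 0%N => j; rewrite expr1n.
move=> g Ag; rewrite mxpow_dmx; apply: eq_dmx => i.
by rewrite invr1 mulr1; apply: expr_dvd dvd3k; apply: H1gen_entry_expr3.
Qed.

Lemma H1gen_decomp f : cocycle (@inX3 C 5) f ->
  exists k, (k < 3)%N /\ exists2 b, coboundary (@inX3 C 5) b &
    forall g, g \in ('Alt_('I_5))%g -> f g = mxpow (H1gen g) k *m b g.
Proof.
move=> cf; have [fE f_neq0 cF] := cocycle_dmxP (fun A (xA : inX3 A) => inDq_diag_unit xA.1) cf.
have f3 g : g \in ('Alt_('I_5))%g -> exists a, forall i, f g i i ^+ (3 ^ a) = 1.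
  by move=> Ag; apply: inDq_diag_expr (cf.1 g Ag).1.
have stab_Alt h : h \in alt_stab ord0 -> h \in ('Alt_('I_5))%g by rewrite alt_stabE => /andP[].
have f_stab_neq0 : {in alt_stab ord0, forall h, f h ord0 ord0 != 0}.
  by move=> h /stab_Alt Ah; apply: f_neq0.
have fc3 : f c123 ord0 ord0 ^+ 3 = 1.
  rewrite -(charX (diag_cocycle_stab cF) f_stab_neq0 3 c123_stab) cycle3_expg3 //.
  exact: char1 (diag_cocycle_stab cF) f_stab_neq0.
have [[k lt_k3] /= fc] := prim_rootP w_prim fc3.
pose W g i := f g i i * (H1gen_entry g i ^+ k)^-1.
have cW : diag_cocycle W := diag_cocycleM cF (diag_cocycleV (diag_cocycleX k diag_cocycle_H1gen)).
have W_neq0 : {in ('Alt_('I_5))%g, forall g i, W g i != 0}.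
  by move=> g Ag i; rewrite /W mulf_neq0 ?f_neq0 // invr_eq0 expf_neq0 // H1gen_entry_neq0.
have W3 : {in ('Alt_('I_5))%g, forall g, exists a, forall i, W g i ^+ (3 ^ a) = 1}.
  move=> g /f3[a fa]; exists a.+1 => i; rewrite /W exprMn (expr_dvd (fa i)) ?dvdn_exp2l //.
  rewrite (@expr_dvd _ 3 (H1gen_entry g i ^+ k)^-1) ?mul1r ?expnS ?dvdn_mulr //.
  by rewrite exprVn exprAC H1gen_entry_expr3 expr1n invr1.
have W_stab : {in alt_stab ord0, forall h, W h ord0 = 1}.
  apply: stab5_char_eq1 (diag_cocycle_stab cW) _ _ _ => [h /stab_Alt Ah|h /stab_Alt /W3[a Wa]|].
  - exact: W_neq0.
  - by exists a.
  - by rewrite /W H1gen_entry_c123 -fc mulfV ?f_stab_neq0 ?c123_stab.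
have [m m3 WE] := diag_cocycle_coboundary_qpow card_I5_gt3 cW W_neq0 W3 W_stab.
exists k; split=> //; exists (fun g => dmx (W g)).
  by apply: (X3_coboundary (m := m)) => // g Ag; apply: eq_dmx; apply: WE.
move=> g Ag; rewrite fE // mxpow_dmx mul_dmx; apply: eq_dmx => i.
by rewrite /W mulrCA mulfV ?mulr1 // expf_neq0 ?H1gen_entry_neq0.
Qed.

End H1X3.

Theorem H1_X3_cyclic (C : numClosedFieldType) : H1_cyclic_of_order (@inX3 C 5) 3.
Proof.
have [w w_prim] := exists_prim_root3 C.
exists (H1gen w); split.
- exact: cocycle_H1gen.
- move=> k /andP[k_gt0 k_lt3] /(coboundary_H1genX w_prim)/(dvdn_leq k_gt0).
  by rewrite leqNgt k_lt3.
- exact/(coboundary_H1genX w_prim).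
- exact: H1gen_decomp.
Qed.

Theorem lemma8p2 (C : numClosedFieldType) :
  H1_cyclic_of_order (@inX3 C 5) 3 /\
  (forall p q : nat, prime p -> (5 <= p)%N -> prime q -> (p, q) <> (5%N, 3%N) ->
     H1_trivial (@inDq C p q)).
Proof. by split; [apply: H1_X3_cyclic | apply: H1_Dq_trivial]. Qed.
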